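(* Consider the distributed energy beamforming setting and protocol described in the context, with $M\ge 2$ energy transmitters, channel power gains $\beta_1,\dots,\beta_M>0$, channel phases $\theta_1,\dots,\theta_M\in[-\pi,\pi)$, transmit power $P>0$, and $N\ge 1$ feedback intervals per transmitter. Let $\bar\phi_1,\dots,\bar\phi_M$ be the phases produced by the protocol, let $$Q_{\mathrm d}=P\Big(\sum_{m=1}^M\beta_m+\sum_{i,j=1,\,i\neq j}^M\sqrt{\beta_i\beta_j}\cos\big((\bar\phi_i-\theta_i)-(\bar\phi_j-\theta_j)\big)\Big),\qquad Q^\star=P\Big(\sum_{m=1}^M\beta_m+\sum_{i,j=1,\,i\neq j}^M\sqrt{\beta_i\beta_j}\Big),$$ and $\eta=Q_{\mathrm d}/Q^\star$. Then $$\eta\ \ge\ \frac{P}{Q^\star}\left(\sum_{m=1}^M\beta_m+\sum_{i,j=1,\,i\neq j}^M\sqrt{\beta_i\beta_j}\,\cos^2\!\Big(\frac{\pi}{2^N}\Big)\right).$$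
   Context: Setting: $M$ single-antenna energy transmitters ET$_1,\dots,$ET$_M$ send power to one energy receiver (ER). If ET$_m$ transmits with phase $\phi_m$ (each with power $P$), the harvested power at the ER is $Q(\phi_1,\dots,\phi_M)=P\big|\sum_{m}\sqrt{\beta_m}e^{\mathrm{i}(\phi_m-\theta_m)}\big|^2=P\big(\sum_m\beta_m+\sum_{i\ne j}\sqrt{\beta_i\beta_j}\cos((\phi_i-\theta_i)-(\phi_j-\theta_j))\big)$, where idle transmitters contribute nothing. The phases $\theta_m$ are unknown to the transmitters. Protocol: ET$_1$ transmits with fixed phase $\bar\phi_1=0$. Then for $m=2,\dots,M$ in turn, with ET$_1,\dots,$ET$_{m-1}$ transmitting with their fixed phases $\bar\phi_1,\dots,\bar\phi_{m-1}$ and ET$_{m+1},\dots,$ET$_M$ idle, ET$_m$ runs algorithm (A1) below and thereafter transmits with the resulting phase $\bar\phi_m$. Here $Q_m(\phi)=P\big|\sqrt{\beta_m}e^{\mathrm{i}(\phi-\theta_m)}+\sum_{i=1}^{m-1}\sqrt{\beta_i}e^{\mathrm{i}(\bar\phi_i-\theta_i)}\big|^2$ is the harvested power when ET$_m$ uses phase $\phi$. Algorithm (A1) for ET$_m$: initialize $\mathcal A^{(1)}=[-\pi,\pi)$, $\psi=0$, $\psi'=-\pi$. For $n=1,\dots,N$: ET$_m$ transmits with phase $\psi$ and then with phase $\psi'$; the ER feeds back one bit indicating whether $Q_m(\psi)>Q_m(\psi')$ (power measurements assumed exact). If $Q_m(\psi)>Q_m(\psi')$, set $\mathcal A^{(n+1)}=\mathcal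 A^{(n)}\setminus\{\theta\in[-\pi,\pi):\cos(\theta-\psi)<\cos(\theta-\psi')\}$; otherwise set $\mathcal A^{(n+1)}=\mathcal A^{(n)}\setminus\{\theta\in[-\pi,\pi):\cos(\theta-\psi)>\cos(\theta-\psi')\}$. Then set $\psi=\max_{\theta\in\mathcal A^{(n+1)}}\theta$ and $\psi'=\min_{\theta\in\mathcal A^{(n+1)}}\theta$. After the $N$ intervals, output $\bar\phi_m=(\psi+\psi')/2$. *)

From Stdlib Require Import Reals ZArith.
Open Scope R_scope.

(* rsum n f = f 1 + f 2 + ... + f n  (indices start at 1, as in the paper) *)
Fixpoint rsum (n : nat) (f : nat -> R) : R :=
  match n with
  | O => 0
  | S k => rsum k f + f (S k)
  end.

(* Q_m(phi) = P | sqrt(beta_m) e^{i(phi - theta_m)}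
                 + sum_{i=1}^{m-1} sqrt(beta_i) e^{i(phibar_i - theta_i)} |^2,
   written out as (real part)^2 + (imaginary part)^2. *)
Definition Qm (P : R) (beta theta phibar : nat -> R) (m : nat) (phi : R) : R :=
  P * ( (sqrt (beta m) * cos (phi - theta m)
           + rsum (m - 1) (fun i => sqrt (beta i) * cos (phibar i - theta i))) ^ 2
      + (sqrt (beta m) * sin (phi - theta m)
           + rsum (m - 1) (fun i => sqrt (beta i) * sin (phibar i - theta i))) ^ 2 ).

(* theta lies (modulo 2 pi) on the counterclockwise arc from a to b *)
Definition in_arc (a b theta : R) : Prop :=
  exists k : Z, a <= theta + 2 * IZR k * PI <= b.

(* A n is the candidate set A^{(n)} (a subset of
   [-pi,pi)); psi n, psi' n are the values of psi, psi' used in interval n.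
   For n >= 2, "psi = max A, psi' = min A" is read on the circle: psi' and psi
   are the start and end points (counterclockwise) of the arc A^{(n)}. *)
Definition A1_output (Q : R -> R) (N : nat) (out : R) : Prop :=
  exists (A : nat -> R -> Prop) (psi psi' : nat -> R),
    (forall th, A 1%nat th <-> -PI <= th < PI) /\
    psi 1%nat = 0 /\ psi' 1%nat = - PI /\
    (forall n : nat, (1 <= n <= N)%nat ->
       (Q (psi n) > Q (psi' n) ->
          forall th, A (S n) th <-> (A n th /\ ~ (cos (th - psi n) < cos (th - psi' n)))) /\
       (~ (Q (psi n) > Q (psi' n)) ->
          forall th, A (S n) th <-> (A n th /\ ~ (cos (th - psi n) > cos (th - psi' n)))) /\
       psi' (S n) <= psi (S n) < psi' (S n) + 2 * PI /\
       (forall th, A (S n) th <-> (-PI <= th < PI /\ in_arc (psi' (S n)) (psi (S n)) th))) /\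
    out = (psi (S N) + psi' (S N)) / 2.

Definition protocol (M N : nat) (P : R) (beta theta phibar : nat -> R) : Prop :=
  phibar 1%nat = 0 /\
  forall m : nat, (2 <= m <= M)%nat ->
    A1_output (Qm P beta theta phibar m) N (phibar m).

Definition offdiag_sum (M : nat) (g : nat -> nat -> R) : R :=
  rsum M (fun i => rsum M (fun j => if Nat.eqb i j then 0 else g i j)).

Definition Qd (M : nat) (P : R) (beta theta phibar : nat -> R) : R :=
  P * (rsum M beta
       + offdiag_sum M (fun i j => sqrt (beta i * beta j) *
            cos ((phibar i - theta i) - (phibar j - theta j)))).

Definition Qstar (M : nat) (P : R) (beta : nat -> R) : R :=
  P * (rsum M beta + offdiag_sum M (fun i j => sqrt (beta i * beta j))).

From Stdlib Require Import Reals ZArith Lra Lia.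
Open Scope R_scope.

(* When ET_{m+1} runs (A1), the power at the ER is an increasing affine function of
   [cos (t - phi)], where [t] is the phase that aligns ET_{m+1} with the field already
   produced by ET_1..ET_m.  Every comparison therefore keeps the half of the candidate arc
   that contains [t], so after [N] rounds the arc has length [PI / 2^(N-1)] and its midpoint
   is within [PI / 2^N] of [t].  The new contribution is thus aligned with the existing field
   up to a factor [c = cos (PI / 2^N)], and induction on [m] gives
   [|sum_i sqrt(beta_i) e^{i(phibar_i - theta_i)}|^2 >= B + c^2 (S^2 - B)] with
   [B = sum_i beta_i] and [S = sum_i sqrt(beta_i)], which is the claimed bound. *)

Lemma cos_add_2kPI x k : cos (x + 2 * IZR k * PI) = cos x.
Proof.
  destruct (Z_le_gt_dec 0 k) as [Hk|Hk].
  - rewrite <- (Z2Nat.id k Hk), <- INR_IZR_INZ. apply cos_period.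
  - replace k with (- Z.of_nat (Z.to_nat (- k)))%Z by lia.
    rewrite opp_IZR, <- INR_IZR_INZ.
    rewrite <- (cos_period (x + 2 * - INR (Z.to_nat (- k)) * PI) (Z.to_nat (- k))).
    f_equal. ring.
Qed.

Lemma exists_shift_into_fundamental y : exists k : Z, -PI <= y + 2 * IZR k * PI < PI.
Proof.
  pose proof PI_RGT_0 as Hpi.
  set (r := (y + PI) / (2 * PI)).
  destruct (archimed r) as [H1 H2].
  exists (- (up r - 1))%Z. rewrite opp_IZR, minus_IZR.
  assert (Hr : r * (2 * PI) = y + PI) by (unfold r; field; lra).
  split; nra.
Qed.

Lemma in_arc_shift a b x k : in_arc a b (x + 2 * IZR k * PI) -> in_arc a b x.
Proof. intros [j Hj]. exists (j + k)%Z. rewrite plus_IZR. lra. Qed.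

Lemma in_arc_of_fundamental a b a' b' :
  (forall x, -PI <= x < PI -> in_arc a b x -> in_arc a' b' x) ->
  forall x, in_arc a b x -> in_arc a' b' x.
Proof.
  intros Hsub x [j Hj]. destruct (exists_shift_into_fundamental x) as [k Hk].
  apply (in_arc_shift a' b' x k), Hsub; [exact Hk|].
  exists (j - k)%Z. rewrite minus_IZR. lra.
Qed.

Lemma not_in_arc_beyond a L v : L < v < 2 * PI -> ~ in_arc a (a + L) (a + v).
Proof.
  intros Hv [k Hk]. pose proof PI_RGT_0 as Hpi.
  destruct (Z_le_gt_dec 0 k) as [H|H].
  - apply IZR_le in H. nra.
  - assert (H' : (k <= -1)%Z) by lia. apply IZR_le in H'. nra.
Qed.

(* An arc strictly shorter than the circle can only contain shorter arcs: otherwise, starting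
   from the image of [a] in [[a', b']], the longer arc reaches the gap just beyond [b']. *)
Lemma in_arc_width_le a b a' b' :
  a <= b -> 0 <= b' - a' < 2 * PI ->
  (forall x, -PI <= x < PI -> in_arc a b x -> in_arc a' b' x) ->
  b - a <= b' - a'.
Proof.
  intros Hab Hab' Hsub. pose proof (in_arc_of_fundamental _ _ _ _ Hsub) as Hsub'.
  destruct (Rle_or_lt (b - a) (b' - a')) as [|Hlt]; [assumption|exfalso].
  destruct (Hsub' a) as [k Hk]; [exists 0%Z; lra|].
  set (u := a + 2 * IZR k * PI - a').
  assert (Hu : 0 <= u <= b' - a') by (unfold u; lra).
  set (v := (b' - a' + Rmin (b - a + u) (2 * PI)) / 2).
  assert (Hmin : b' - a' < Rmin (b - a + u) (2 * PI)) by (apply Rmin_glb_lt; lra).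
  pose proof (Rmin_l (b - a + u) (2 * PI)). pose proof (Rmin_r (b - a + u) (2 * PI)).
  apply (not_in_arc_beyond a' (b' - a') v); [unfold v; lra|].
  replace (a' + (b' - a')) with b' by ring.
  apply (in_arc_shift _ _ _ (- k)).
  replace (a' + v + 2 * IZR (- k) * PI) with (a + (v - u)) by (unfold u; rewrite opp_IZR; ring).
  apply Hsub'. exists 0%Z. unfold v in *. lra.
Qed.

Lemma in_arc_bisect p' p x : 0 <= p - p' <= PI -> in_arc p' p x ->
  (~ cos (x - p) < cos (x - p') -> in_arc ((p' + p) / 2) p x) /\
  (~ cos (x - p) > cos (x - p') -> in_arc p' ((p' + p) / 2) x).
Proof.
  intros Hw [k Hk].
  set (s := x + 2 * IZR k * PI - p') in *.
  assert (E : cos (x - p) = cos ((p - p') - s)).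
  { rewrite <- (cos_add_2kPI (x - p) k), <- cos_neg. f_equal. unfold s. ring. }
  assert (E' : cos (x - p') = cos s).
  { rewrite <- (cos_add_2kPI (x - p') k). f_equal. unfold s. ring. }
  rewrite E, E'. split; intro H; exists k; unfold s in *; split; try lra.
  - destruct (Rle_or_lt ((p' + p) / 2) (x + 2 * IZR k * PI)) as [|Hs]; [assumption|].
    exfalso. apply H. apply cos_decreasing_1; lra.
  - destruct (Rle_or_lt (x + 2 * IZR k * PI) ((p' + p) / 2)) as [|Hs]; [assumption|].
    exfalso. apply H. apply cos_decreasing_1; lra.
Qed.

(* The first comparison, between [0] and [-PI], is the sign of [cos x]. *)
Lemma in_arc_halve_circle x : -PI <= x < PI ->
  (~ cos (x - 0) < cos (x - - PI) -> in_arc (- (PI / 2)) (PI / 2) x) /\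
  (~ cos (x - 0) > cos (x - - PI) -> in_arc (PI / 2) (3 * (PI / 2)) x).
Proof.
  intro Hx. pose proof PI_RGT_0 as Hpi.
  replace (x - 0) with x by ring. replace (x - - PI) with (x + PI) by ring.
  rewrite neg_cos.
  assert (Hneg : forall y, PI / 2 < y <= PI -> cos y < 0).
  { intros y Hy. rewrite <- cos_PI2. apply cos_decreasing_1; lra. }
  split; intro H.
  - exists 0%Z. rewrite Rmult_0_r, Rmult_0_l, Rplus_0_r.
    destruct (Rle_or_lt x (PI / 2)) as [H1|H1].
    + destruct (Rle_or_lt (- (PI / 2)) x) as [H2|H2]; [lra|].
      exfalso. apply H. pose proof (Hneg (- x)). rewrite cos_neg in *. lra.
    + exfalso. apply H. pose proof (Hneg x). lra.
  - destruct (Rle_or_lt (PI / 2) x) as [H1|H1].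
    + exists 0%Z. lra.
    + destruct (Rle_or_lt x (- (PI / 2))) as [H2|H2].
      * exists 1%Z. lra.
      * exfalso. apply H. pose proof (cos_gt_0 x). lra.
Qed.

Lemma cos_le_at_midpoint a b x d : in_arc a b x -> b - a <= 2 * d -> d <= PI ->
  cos d <= cos (x - (a + b) / 2).
Proof.
  intros [k Hk] Hw Hd. rewrite <- (cos_add_2kPI (x - (a + b) / 2) k).
  set (y := x - (a + b) / 2 + 2 * IZR k * PI).
  assert (Hy : Rabs y <= d) by (apply Rabs_le; unfold y; lra).
  replace (cos y) with (cos (Rabs y))
    by (unfold Rabs; destruct (Rcase_abs y); [apply cos_neg | reflexivity]).
  destruct (Rle_lt_or_eq_dec _ _ Hy) as [Hlt|Heq]; [|rewrite Heq; lra].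
  left. apply cos_decreasing_1; [apply Rabs_pos | lra | | lra | exact Hlt].
  pose proof (Rabs_pos y). lra.
Qed.

Lemma PI_div_pow2_le n : PI / 2 ^ n <= PI.
Proof.
  pose proof PI_RGT_0 as Hpi. assert (1 <= 2 ^ n) by (apply pow_R1_Rle; lra).
  unfold Rdiv. rewrite <- (Rmult_1_r PI) at 2. apply Rmult_le_compat_l; [lra|].
  rewrite <- Rinv_1. apply Rinv_le_contravar; lra.
Qed.

Lemma PI_div_pow2_pos n : 0 < PI / 2 ^ n.
Proof. apply Rdiv_lt_0_compat; [apply PI_RGT_0 | apply pow_lt; lra]. Qed.

Section Bisection.

Variables (Q : R -> R) (N : nat) (t : R) (A : nat -> R -> Prop) (psi psi' : nat -> R).

Hypothesis Q_tracks_target : forall a b, Q a > Q b <-> cos (t - a) > cos (t - b).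
Hypothesis target_range : -PI <= t < PI.
Hypothesis A_init : forall th, A 1%nat th <-> -PI <= th < PI.
Hypothesis psi_init : psi 1%nat = 0.
Hypothesis psi'_init : psi' 1%nat = - PI.
Hypothesis A_step : forall n : nat, (1 <= n <= N)%nat ->
  (Q (psi n) > Q (psi' n) ->
     forall th, A (S n) th <-> (A n th /\ ~ (cos (th - psi n) < cos (th - psi' n)))) /\
  (~ (Q (psi n) > Q (psi' n)) ->
     forall th, A (S n) th <-> (A n th /\ ~ (cos (th - psi n) > cos (th - psi' n)))) /\
  psi' (S n) <= psi (S n) < psi' (S n) + 2 * PI /\
  (forall th, A (S n) th <-> (-PI <= th < PI /\ in_arc (psi' (S n)) (psi (S n)) th)).

Lemma target_in_A n : (1 <= n <= S N)%nat -> A n t.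
Proof.
  induction n as [|n IH]; intro Hn; [lia|].
  destruct (Nat.eq_dec n 0) as [->|Hn0]; [apply A_init; exact target_range|].
  destruct (A_step n) as (Hgt & Hngt & _ & _); [lia|].
  destruct (Rlt_dec (Q (psi' n)) (Q (psi n))) as [Hl|Hl].
  - apply (Hgt Hl). split; [apply IH; lia|].
    apply Q_tracks_target in Hl. lra.
  - apply (Hngt Hl). split; [apply IH; lia|].
    intro Hc. apply Hl, Q_tracks_target, Hc.
Qed.

Lemma arc_width_of_cover n a' b' : (1 <= n <= N)%nat -> 0 <= b' - a' < 2 * PI ->
  (forall x, -PI <= x < PI -> A (S n) x -> in_arc a' b' x) ->
  psi (S n) - psi' (S n) <= b' - a'.
Proof.
  intros Hn Hw Hcover. destruct (A_step n Hn) as (_ & _ & Hord & Harc).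
  apply in_arc_width_le; [lra | exact Hw|].
  intros x Hx Hin. apply Hcover; [exact Hx|]. apply Harc. auto.
Qed.

Lemma arc_width_first : (1 <= N)%nat -> psi 2%nat - psi' 2%nat <= PI.
Proof.
  intro HN. pose proof PI_RGT_0 as Hpi.
  destruct (A_step 1%nat) as (Hgt & Hngt & _ & _); [lia|].
  destruct (Rlt_dec (Q (psi' 1%nat)) (Q (psi 1%nat))) as [Hl|Hl].
  - apply Rle_trans with (PI / 2 - - (PI / 2)); [|lra].
    apply arc_width_of_cover; [lia | lra|].
    intros x Hx HA. apply (Hgt Hl) in HA as [_ Hc]. rewrite psi_init, psi'_init in Hc.
    exact (proj1 (in_arc_halve_circle x Hx) Hc).
  - apply Rle_trans with (3 * (PI / 2) - PI / 2); [|lra].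
    apply arc_width_of_cover; [lia | lra|].
    intros x Hx HA. apply (Hngt Hl) in HA as [_ Hc]. rewrite psi_init, psi'_init in Hc.
    exact (proj2 (in_arc_halve_circle x Hx) Hc).
Qed.

Lemma arc_width_next n : (1 <= n < N)%nat -> psi (S n) - psi' (S n) <= PI ->
  psi (S (S n)) - psi' (S (S n)) <= (psi (S n) - psi' (S n)) / 2.
Proof.
  intros Hn Hle. pose proof PI_RGT_0 as Hpi.
  destruct (A_step (S n)) as (Hgt & Hngt & _ & _); [lia|].
  destruct (A_step n) as (_ & _ & Hord & Harc); [lia|].
  set (p := psi (S n)) in *. set (p' := psi' (S n)) in *.
  assert (Hw : 0 <= p - p' <= PI) by lra.
  destruct (Rlt_dec (Q p') (Q p)) as [Hl|Hl].
  - replace ((p - p') / 2) with (p - (p' + p) / 2) by field.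
    apply arc_width_of_cover; [lia | lra|].
    intros x _ HA. apply (Hgt Hl) in HA as [HA Hc]. apply Harc in HA as [_ HA].
    exact (proj1 (in_arc_bisect p' p x Hw HA) Hc).
  - replace ((p - p') / 2) with ((p' + p) / 2 - p') by field.
    apply arc_width_of_cover; [lia | lra|].
    intros x _ HA. apply (Hngt Hl) in HA as [HA Hc]. apply Harc in HA as [_ HA].
    exact (proj2 (in_arc_bisect p' p x Hw HA) Hc).
Qed.

Lemma arc_width_le j : (j < N)%nat -> psi (S (S j)) - psi' (S (S j)) <= PI / 2 ^ j.
Proof.
  induction j as [|j IH]; intro Hj.
  - rewrite pow_O, Rdiv_1_r. apply arc_width_first. lia.
  - pose proof (IH ltac:(lia)) as Hw. pose proof (PI_div_pow2_le j).
    pose proof (arc_width_next (S j) ltac:(lia) ltac:(lra)).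
    replace (PI / 2 ^ S j) with (PI / 2 ^ j / 2) by (simpl; field; apply pow_nonzero; lra).
    lra.
Qed.

Lemma bisection_output_close out : (1 <= N)%nat ->
  out = (psi (S N) + psi' (S N)) / 2 -> cos (PI / 2 ^ N) <= cos (t - out).
Proof.
  intros HN ->. set (n := pred N). assert (HnN : S n = N) by (unfold n; lia).
  destruct (A_step N) as (_ & _ & _ & Harc); [lia|].
  destruct (proj1 (Harc t) (target_in_A (S N) ltac:(lia))) as [_ Hin].
  rewrite Rplus_comm. apply (cos_le_at_midpoint _ _ _ _ Hin).
  - pose proof (arc_width_le n ltac:(lia)) as Hw. rewrite HnN in Hw.
    replace (2 * (PI / 2 ^ N)) with (PI / 2 ^ n)
      by (rewrite <- HnN; simpl; field; apply pow_nonzero; lra).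
    exact Hw.
  - apply PI_div_pow2_le.
Qed.

End Bisection.

Lemma A1_output_close Q N out t : (1 <= N)%nat ->
  (forall a b, Q a > Q b <-> cos (t - a) > cos (t - b)) ->
  A1_output Q N out -> cos (PI / 2 ^ N) <= cos (t - out).
Proof.
  intros HN HQ (A & psi & psi' & HA1 & Hp & Hp' & Hstep & Hout).
  destruct (exists_shift_into_fundamental t) as [k Hk].
  assert (Ht : forall a, cos (t - a) = cos (t + 2 * IZR k * PI - a)).
  { intro a. rewrite <- (cos_add_2kPI (t - a) k). f_equal. ring. }
  rewrite Ht. apply (bisection_output_close Q N _ A psi psi'); auto.
  intros a b. rewrite <- !Ht. apply HQ.
Qed.

Definition field_re (beta theta phibar : nat -> R) (m : nat) : R :=
  rsum m (fun i => sqrt (beta i) * cos (phibar i - theta i)).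

Definition field_im (beta theta phibar : nat -> R) (m : nat) : R :=
  rsum m (fun i => sqrt (beta i) * sin (phibar i - theta i)).

Lemma exists_polar_angle X Y : 0 < X ^ 2 + Y ^ 2 -> exists rho,
  X = sqrt (X ^ 2 + Y ^ 2) * cos rho /\ Y = sqrt (X ^ 2 + Y ^ 2) * sin rho.
Proof.
  intro H. set (r := sqrt (X ^ 2 + Y ^ 2)).
  assert (Hr : 0 < r) by (apply sqrt_lt_R0; lra).
  assert (Hr2 : r * r = X ^ 2 + Y ^ 2) by (apply sqrt_sqrt; lra).
  assert (HB : -1 <= X / r <= 1).
  { split; apply (Rmult_le_reg_r r); try lra; unfold Rdiv;
      rewrite Rmult_assoc, Rinv_l by lra; nra. }
  assert (Hs : sqrt (1 - (X / r)²) = Rabs Y / r).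
  { replace (1 - (X / r)²) with ((Y / r)²).
    - rewrite sqrt_Rsqr_abs. unfold Rdiv. rewrite Rabs_mult, (Rabs_right (/ r)); [reflexivity|].
      left. apply Rinv_0_lt_compat. lra.
    - unfold Rsqr. field_simplify_eq; [|lra]. nra. }
  destruct (Rle_or_lt 0 Y) as [HY|HY].
  - exists (acos (X / r)). rewrite cos_acos, sin_acos, Hs by exact HB.
    rewrite Rabs_right by lra. split; field; lra.
  - exists (- acos (X / r)). rewrite cos_neg, sin_neg, cos_acos, sin_acos, Hs by exact HB.
    rewrite Rabs_left by lra. split; field; lra.
Qed.

Lemma norm2_add_polar s u r rho :
  (s * cos u + r * cos rho) ^ 2 + (s * sin u + r * sin rho) ^ 2
  = s ^ 2 + r ^ 2 + 2 * s * r * cos (rho - u).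
Proof.
  rewrite cos_minus. pose proof (sin2_cos2 u). pose proof (sin2_cos2 rho).
  unfold Rsqr in *. nra.
Qed.

Lemma A1_output_aligned P beta theta phibar N m :
  0 < P -> 0 < beta (S m) -> (1 <= N)%nat ->
  A1_output (Qm P beta theta phibar (S m)) N (phibar (S m)) ->
  cos (PI / 2 ^ N) * sqrt (field_re beta theta phibar m ^ 2 + field_im beta theta phibar m ^ 2)
  <= field_re beta theta phibar m * cos (phibar (S m) - theta (S m))
   + field_im beta theta phibar m * sin (phibar (S m) - theta (S m)).
Proof.
  intros HP Hb HN HA.
  set (X := field_re beta theta phibar m). set (Y := field_im beta theta phibar m).
  destruct (Rle_lt_or_eq_dec 0 (X ^ 2 + Y ^ 2)) as [Hpos|H0]; [nra| |].
  2:{ assert (X = 0) by nra. assert (Y = 0) by nra. rewrite <- H0, sqrt_0. nra. }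
  destruct (exists_polar_angle X Y Hpos) as [rho [HX HY]].
  set (r := sqrt (X ^ 2 + Y ^ 2)) in *.
  assert (Hr : 0 < r) by (apply sqrt_lt_R0; lra).
  set (s := sqrt (beta (S m))).
  assert (Hs : 0 < s) by (apply sqrt_lt_R0; lra).
  set (t := theta (S m) + rho).
  assert (HQm : forall phi, Qm P beta theta phibar (S m) phi =
                 P * (s ^ 2 + r ^ 2) + 2 * P * s * r * cos (t - phi)).
  { intro phi. unfold Qm. replace (S m - 1)%nat with m by lia.
    change (P * ((s * cos (phi - theta (S m)) + X) ^ 2 + (s * sin (phi - theta (S m)) + Y) ^ 2)
            = P * (s ^ 2 + r ^ 2) + 2 * P * s * r * cos (t - phi)).
    rewrite HX, HY, norm2_add_polar.
    replace (rho - (phi - theta (S m))) with (t - phi) by (unfold t; ring). ring. }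
  assert (HQ : forall a b, Qm P beta theta phibar (S m) a > Qm P beta theta phibar (S m) b
                 <-> cos (t - a) > cos (t - b)).
  { intros a b. rewrite !HQm. assert (0 < 2 * P * s * r) by (repeat apply Rmult_lt_0_compat; lra).
    split; intro; nra. }
  pose proof (A1_output_close _ N _ t HN HQ HA) as Hc.
  replace (X * cos (phibar (S m) - theta (S m)) + Y * sin (phibar (S m) - theta (S m)))
    with (r * cos (t - phibar (S m))).
  - nra.
  - replace (t - phibar (S m)) with (rho - (phibar (S m) - theta (S m))) by (unfold t; ring).
    rewrite cos_minus, HX, HY. ring.
Qed.

(* The invariant itself gives [|F| >= c S], so the [c]-aligned new term adds at least
   [s^2 + 2 s c^2 S]. *)
Lemma norm2_lower_bound_step X Y B S s a c :
  0 <= B -> 0 <= S -> 0 <= s -> 0 <= c <= 1 ->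
  X ^ 2 + Y ^ 2 >= B + c ^ 2 * (S ^ 2 - B) ->
  c * sqrt (X ^ 2 + Y ^ 2) <= X * cos a + Y * sin a ->
  (X + s * cos a) ^ 2 + (Y + s * sin a) ^ 2 >= B + s ^ 2 + c ^ 2 * ((S + s) ^ 2 - (B + s ^ 2)).
Proof.
  intros HB HS Hs Hc Hinv Halign.
  set (r := sqrt (X ^ 2 + Y ^ 2)) in *.
  assert (Hr0 : 0 <= r) by apply sqrt_pos.
  assert (Hr2 : r * r = X ^ 2 + Y ^ 2) by (apply sqrt_sqrt; nra).
  assert (HrS : c * S <= r).
  { assert (0 <= (1 - c ^ 2) * B) by (apply Rmult_le_pos; nra).
    assert (0 <= c * S) by nra.
    apply Rsqr_incr_0_var; [unfold Rsqr; nra | exact Hr0]. }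
  assert (Hsa : s * (c * (c * S)) <= s * (X * cos a + Y * sin a)).
  { apply Rmult_le_compat_l; [exact Hs|].
    apply Rle_trans with (c * r); [apply Rmult_le_compat_l; lra | exact Halign]. }
  pose proof (sin2_cos2 a). unfold Rsqr in *. nra.
Qed.

Lemma rsum_ext n f g : (forall i, (1 <= i <= n)%nat -> f i = g i) -> rsum n f = rsum n g.
Proof.
  induction n as [|n IH]; intro H; simpl; [reflexivity|].
  rewrite IH, H by (try intros; lia || (apply H; lia)). reflexivity.
Qed.

Lemma rsum_plus n f g : rsum n (fun i => f i + g i) = rsum n f + rsum n g.
Proof. induction n as [|n IH]; simpl; [ring|]. rewrite IH. ring. Qed.

Lemma rsum_minus n f g : rsum n (fun i => f i - g i) = rsum n f - rsum n g.
Proof. induction n as [|n IH]; simpl; [ring|]. rewrite IH. ring. Qed.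

Lemma rsum_mult_l n c f : rsum n (fun i => c * f i) = c * rsum n f.
Proof. induction n as [|n IH]; simpl; [ring|]. rewrite IH. ring. Qed.

Lemma rsum_mult_r n c f : rsum n (fun i => f i * c) = rsum n f * c.
Proof. induction n as [|n IH]; simpl; [ring|]. rewrite IH. ring. Qed.

Lemma rsum_prod n u v :
  rsum n (fun i => rsum n (fun j => u i * v j)) = rsum n u * rsum n v.
Proof. rewrite <- rsum_mult_r. apply rsum_ext. intros i _. apply rsum_mult_l. Qed.

Lemma rsum_nonneg n f : (forall i, (1 <= i <= n)%nat -> 0 <= f i) -> 0 <= rsum n f.
Proof.
  induction n as [|n IH]; intro H; simpl; [lra|].
  assert (0 <= rsum n f) by (apply IH; intros; apply H; lia).
  assert (0 <= f (S n)) by (apply H; lia). lra.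
Qed.

Lemma rsum_pos n f : (1 <= n)%nat -> (forall i, (1 <= i <= n)%nat -> 0 < f i) -> 0 < rsum n f.
Proof.
  intros Hn H. destruct n as [|n]; [lia|]. simpl.
  assert (0 <= rsum n f) by (apply rsum_nonneg; intros; left; apply H; lia).
  assert (0 < f (S n)) by (apply H; lia). lra.
Qed.

Lemma rsum_skip n i g : (1 <= i)%nat ->
  rsum n (fun j => if Nat.eqb i j then 0 else g j) = rsum n g - (if Nat.leb i n then g i else 0).
Proof.
  intro Hi. induction n as [|n IH]; simpl.
  - destruct i; [lia|]. simpl. ring.
  - rewrite IH. destruct (Nat.eqb_spec i (S n)) as [->|Hne].
    + rewrite Nat.leb_refl. replace (Nat.leb (S n) n) with false
        by (symmetry; apply Nat.leb_gt; lia). ring.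
    + destruct (Nat.leb_spec i n); destruct (Nat.leb_spec i (S n)); try lia; ring.
Qed.

Lemma offdiag_sum_eq n g :
  offdiag_sum n g = rsum n (fun i => rsum n (g i)) - rsum n (fun i => g i i).
Proof.
  unfold offdiag_sum. rewrite <- rsum_minus. apply rsum_ext. intros i Hi.
  rewrite rsum_skip by lia. replace (Nat.leb i n) with true by (symmetry; apply Nat.leb_le; lia).
  reflexivity.
Qed.

Lemma offdiag_sum_ext n f g : (forall i j, (1 <= i <= n)%nat -> (1 <= j <= n)%nat -> f i j = g i j) ->
  offdiag_sum n f = offdiag_sum n g.
Proof.
  intro H. unfold offdiag_sum. apply rsum_ext. intros i Hi. apply rsum_ext. intros j Hj.
  rewrite H by assumption. reflexivity.
Qed.

Lemma offdiag_sum_plus n f g :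
  offdiag_sum n (fun i j => f i j + g i j) = offdiag_sum n f + offdiag_sum n g.
Proof.
  unfold offdiag_sum. rewrite <- rsum_plus. apply rsum_ext. intros i _.
  rewrite <- rsum_plus. apply rsum_ext. intros j _. destruct (Nat.eqb i j); ring.
Qed.

Lemma offdiag_sum_mul n u :
  offdiag_sum n (fun i j => u i * u j) = rsum n u ^ 2 - rsum n (fun i => u i ^ 2).
Proof.
  rewrite offdiag_sum_eq, rsum_prod.
  rewrite (rsum_ext n (fun i => u i * u i) (fun i => u i ^ 2)) by (intros; ring). ring.
Qed.

Section Gains.

Variables (M : nat) (beta : nat -> R).
Hypothesis beta_nonneg : forall i, (1 <= i <= M)%nat -> 0 <= beta i.

Lemma sqrt_beta_mul i j : (1 <= i <= M)%nat -> (1 <= j <= M)%nat ->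
  sqrt (beta i * beta j) = sqrt (beta i) * sqrt (beta j).
Proof. intros Hi Hj. apply sqrt_mult; apply beta_nonneg; assumption. Qed.

Lemma rsum_sqrt_beta_sq : rsum M (fun i => sqrt (beta i) ^ 2) = rsum M beta.
Proof. apply rsum_ext. intros i Hi. apply pow2_sqrt, beta_nonneg, Hi. Qed.

Lemma offdiag_sqrt_beta :
  offdiag_sum M (fun i j => sqrt (beta i * beta j))
  = rsum M (fun i => sqrt (beta i)) ^ 2 - rsum M beta.
Proof.
  rewrite (offdiag_sum_ext M _ (fun i j => sqrt (beta i) * sqrt (beta j))) by exact sqrt_beta_mul.
  rewrite offdiag_sum_mul, rsum_sqrt_beta_sq. reflexivity.
Qed.

Lemma Qstar_eq P : Qstar M P beta = P * rsum M (fun i => sqrt (beta i)) ^ 2.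
Proof. unfold Qstar. rewrite offdiag_sqrt_beta. ring. Qed.

Lemma Qd_eq_field_power P theta phibar :
  Qd M P beta theta phibar
  = P * (field_re beta theta phibar M ^ 2 + field_im beta theta phibar M ^ 2).
Proof.
  unfold Qd, field_re, field_im.
  set (a := fun i => sqrt (beta i) * cos (phibar i - theta i)).
  set (b := fun i => sqrt (beta i) * sin (phibar i - theta i)).
  rewrite (offdiag_sum_ext M _ (fun i j => a i * a j + b i * b j)).
  - rewrite offdiag_sum_plus, !offdiag_sum_mul.
    assert (Hdiag : rsum M (fun i => a i ^ 2) + rsum M (fun i => b i ^ 2) = rsum M beta).
    { rewrite <- rsum_sqrt_beta_sq, <- rsum_plus. apply rsum_ext. intros i _.
      unfold a, b. pose proof (sin2_cos2 (phibar i - theta i)). unfold Rsqr in *. nra. }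
    rewrite <- Hdiag. ring.
  - intros i j Hi Hj. rewrite sqrt_beta_mul, cos_minus by assumption. unfold a, b. ring.
Qed.

End Gains.

Lemma offdiag_sum_mult_r n f c :
  offdiag_sum n (fun i j => f i j * c) = offdiag_sum n f * c.
Proof.
  unfold offdiag_sum. rewrite <- rsum_mult_r. apply rsum_ext. intros i _.
  rewrite <- rsum_mult_r. apply rsum_ext. intros j _. destruct (Nat.eqb i j); ring.
Qed.

Lemma cos_PI_div_pow2_bounds N : (1 <= N)%nat -> 0 <= cos (PI / 2 ^ N) <= 1.
Proof.
  intro HN. pose proof PI_RGT_0 as Hpi. split; [|apply COS_bound].
  apply cos_ge_0; [pose proof (PI_div_pow2_pos N); lra|].
  destruct N as [|n]; [lia|].
  replace (PI / 2 ^ S n) with (PI / 2 ^ n / 2) by (simpl; field; apply pow_nonzero; lra).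
  pose proof (PI_div_pow2_le n). lra.
Qed.

Lemma field_power_lower_bound M N P beta theta phibar m :
  (1 <= N)%nat -> 0 < P -> (forall i, (1 <= i <= M)%nat -> 0 < beta i) ->
  protocol M N P beta theta phibar -> (m <= M)%nat ->
  field_re beta theta phibar m ^ 2 + field_im beta theta phibar m ^ 2
  >= rsum m beta
     + cos (PI / 2 ^ N) ^ 2 * (rsum m (fun i => sqrt (beta i)) ^ 2 - rsum m beta).
Proof.
  intros HN HP Hb [_ Hprot]. pose proof (cos_PI_div_pow2_bounds N HN) as Hc.
  induction m as [|m IH]; intro Hm; [unfold field_re, field_im; simpl; nra|].
  assert (Hbm : 0 < beta (S m)) by (apply Hb; lia).
  assert (Halign : cos (PI / 2 ^ N) * sqrt (field_re beta theta phibar m ^ 2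
                                            + field_im beta theta phibar m ^ 2)
          <= field_re beta theta phibar m * cos (phibar (S m) - theta (S m))
           + field_im beta theta phibar m * sin (phibar (S m) - theta (S m))).
  { destruct m as [|m].
    - unfold field_re, field_im. simpl. rewrite Rmult_0_l, Rplus_0_l, sqrt_0. lra.
    - apply (A1_output_aligned P); [exact HP | exact Hbm | exact HN | apply Hprot; lia]. }
  pose proof (norm2_lower_bound_step (field_re beta theta phibar m) (field_im beta theta phibar m)
    (rsum m beta) (rsum m (fun i => sqrt (beta i))) (sqrt (beta (S m)))
    (phibar (S m) - theta (S m)) (cos (PI / 2 ^ N))) as Hstep.
  rewrite pow2_sqrt in Hstep by lra.
  apply Hstep; [| | apply sqrt_pos | exact Hc | apply IH; lia | exact Halign].
  - apply rsum_nonneg. intros. left. apply Hb. lia.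
  - apply rsum_nonneg. intros. apply sqrt_pos.
Qed.

Theorem proposition1 (M N : nat) (P : R) (beta theta phibar : nat -> R) :
  (2 <= M)%nat -> (1 <= N)%nat -> 0 < P ->
  (forall m, (1 <= m <= M)%nat -> 0 < beta m) ->
  (forall m, (1 <= m <= M)%nat -> -PI <= theta m < PI) ->
  protocol M N P beta theta phibar ->
  Qd M P beta theta phibar / Qstar M P beta >=
  P / Qstar M P beta *
    (rsum M beta
     + offdiag_sum M (fun i j => sqrt (beta i * beta j) * (cos (PI / 2 ^ N)) ^ 2)).
Proof.
  (* (A1) only sees the phases [theta] modulo [2 PI]. *)
  intros HM HN HP Hb _ Hprot.
  assert (Hb0 : forall i, (1 <= i <= M)%nat -> 0 <= beta i) by (intros; left; apply Hb; lia).
  pose proof (field_power_lower_bound M N P beta theta phibar M HN HP Hb Hprot (le_n M)) as Hpow.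
  assert (HQs : 0 < Qstar M P beta).
  { rewrite Qstar_eq by exact Hb0. apply Rmult_lt_0_compat; [exact HP|].
    apply pow_lt, rsum_pos; [lia|]. intros i Hi. apply sqrt_lt_R0, Hb, Hi. }
  rewrite offdiag_sum_mult_r, offdiag_sqrt_beta, Qd_eq_field_power by exact Hb0.
  assert (Hk : 0 <= P * / Qstar M P beta)
    by (apply Rlt_le, Rmult_lt_0_compat; [exact HP | apply Rinv_0_lt_compat, HQs]).
  unfold Rdiv. nra.
Qed.
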